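(* Let $D$ be a friendship digraph and let $u,v$ be two distinct vertices of $D$. If $(u,v)\notin A(D)$ or $(v,u)\notin A(D)$, then $d^+(u)=d^+(v)$.
   Context: All digraphs are finite and have neither loops nor parallel arcs (a pair of opposite arcs $(u,v)$ and $(v,u)$ is allowed). $A(D)$ is the arc set and $d^+(v)$ the outdegree of $v$. A friendship digraph is a nontrivial digraph (at least two vertices) in which any two distinct vertices have exactly one common out-neighbor. *)

From mathcomp Require Import all_boot.
Set Implicit Arguments. Unset Strict Implicit. Unset Printing Implicit Defensive.

(* Parallel arcs are impossible by construction
   (a relation); loops are excluded by irreflexivity. *)
Definition loopless (T : finType) (arc : rel T) : Prop := irreflexive arc.

Definition outN (T : finType) (arc : rel T) (v : T) : {set T} := [set w | arc v w].
Definition outdeg (T : finType) (arc : rel T) (v : T) : nat := #|outN arc v|.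

Definition friendship_digraph (T : finType) (arc : rel T) : Prop :=
  [/\ loopless arc, 2 <= #|T| &
      forall x y : T, x != y -> #|outN arc x :&: outN arc y| = 1].

From mathcomp Require Import all_boot.
Set Implicit Arguments. Unset Strict Implicit. Unset Printing Implicit Defensive.

(* If x is not joined to z, sending an in-neighbour y of z to the common
   out-neighbour of x and y is injective into N+(x), so d-(z) <= d+(x).  With
   no loops this gives d-(x) <= d+(x) for every x, and since both degree sums
   count the arcs, d- = d+.  Hence d+(z) <= d+(x) whenever (x,z) is not an arc;
   summing over all such pairs, both sides count sum_v (n - d+(v)) d+(v), so
   every one of these inequalities is an equality. *)

Lemma leq_sum_eq (I : finType) (P : pred I) (E1 E2 : I -> nat) :
    (forall i, P i -> E1 i <= E2 i) ->
    \sum_(i | P i) E1 i = \sum_(i | P i) E2 i ->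
  forall i, P i -> E1 i = E2 i.
Proof.
move=> leE12 eqE12 i Pi.
have /leqif_sum[_] := fun i Pi => leqif_eq (leE12 i Pi).
by rewrite eqE12 eqxx => /esym/forall_inP/(_ i Pi)/eqP.
Qed.

Lemma sum_rel_exchange (I J : finType) (r : I -> J -> bool) (F : J -> nat) :
  \sum_i \sum_(j | r i j) F j = \sum_j #|[set i | r i j]| * F j.
Proof.
rewrite (exchange_big_dep predT) //=; apply: eq_bigr => j _.
exact: sum_nat_cond_const.
Qed.

Section FriendshipDigraph.

Variables (T : finType) (arc : rel T).

Definition inN (z : T) : {set T} := [set y | arc y z].
Definition indeg (z : T) : nat := #|inN z|.

Lemma sum_indeg_outdeg : \sum_z indeg z = \sum_x outdeg arc x.
Proof.
have := sum_rel_exchange arc (fun _ => 1).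
under eq_bigr do rewrite sum1dep_card.
under [RHS]eq_bigr do rewrite muln1.
by move=> <-.
Qed.

Hypothesis friendship : friendship_digraph arc.

Lemma common_out_neighbour x y :
  x != y -> exists w, w \in outN arc x :&: outN arc y.
Proof.
case: friendship => _ _ common /common card1.
by apply/card_gt0P; rewrite card1.
Qed.

Lemma common_out_neighbour_unique y y' w w' : y != y' ->
    w \in outN arc y :&: outN arc y' -> w' \in outN arc y :&: outN arc y' ->
  w = w'.
Proof.
case: friendship => _ _ common /common/eqP/cards1P[c ->].
by rewrite !inE => /eqP-> /eqP->.
Qed.

Lemma indeg_le_outdeg_nonarc x z : ~~ arc x z -> indeg z <= outdeg arc x.
Proof.
move=> nxz.
have neq_x y : y \in inN z -> x != y.
  by rewrite inE; apply: contraL => /eqP <-.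
pose f y := odflt z [pick w in outN arc x :&: outN arc y].
have f_common y : y \in inN z -> f y \in outN arc x :&: outN arc y.
  move=> /neq_x/common_out_neighbour[w w_common].
  by rewrite /f; case: pickP => [//|/(_ w)]; rewrite w_common.
have f_out y : y \in inN z -> f y \in outN arc x.
  by move=> /f_common; rewrite inE => /andP[].
rewrite /indeg -(card_in_imset (f := f)).
  by apply/subset_leq_card/subsetP => _ /imsetP[y /f_out fy ->].
(* Distinct y, y' with equal images would have the two common out-neighbours
   f y and z, and these differ because x -> f y but not x -> z. *)
move=> y y' yz y'z eq_f; apply: contraNeq nxz => neq_y.
have fy_common : f y \in outN arc y :&: outN arc y'.
  have := f_common y yz; have := f_common y' y'z; rewrite -eq_f !inE.
  by move=> /andP[_ ->] /andP[_ ->].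
have z_common : z \in outN arc y :&: outN arc y'.
  by move: yz y'z; rewrite !inE => -> ->.
have := f_out y yz.
by rewrite (common_out_neighbour_unique neq_y fy_common z_common) inE.
Qed.

Lemma indeg_eq_outdeg x : indeg x = outdeg arc x.
Proof.
have [loopless _ _] := friendship.
apply: (leq_sum_eq (P := predT)) sum_indeg_outdeg x isT => {}x _.
by apply: indeg_le_outdeg_nonarc; rewrite loopless.
Qed.

Lemma card_non_in_neighbours z :
  #|[set x | ~~ arc x z]| = #|[set y | ~~ arc z y]|.
Proof.
have -> : [set x | ~~ arc x z] = ~: inN z by apply/setP => x; rewrite !inE.
have -> : [set y | ~~ arc z y] = ~: outN arc z by apply/setP => y; rewrite !inE.
by rewrite [LHS]cardsCs [RHS]cardsCs !setCK -/(indeg z) indeg_eq_outdeg.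
Qed.

Lemma sum_outdeg_nonarcs :
  \sum_x \sum_(z | ~~ arc x z) outdeg arc z
  = \sum_x \sum_(z | ~~ arc x z) outdeg arc x.
Proof.
rewrite (sum_rel_exchange (fun x z => ~~ arc x z)).
by apply: eq_bigr => x _; rewrite card_non_in_neighbours sum_nat_cond_const.
Qed.

Lemma outdeg_eq_nonarc x z : ~~ arc x z -> outdeg arc x = outdeg arc z.
Proof.
have le_nonarc x' z' : ~~ arc x' z' -> outdeg arc z' <= outdeg arc x'.
  by rewrite -indeg_eq_outdeg; apply: indeg_le_outdeg_nonarc.
have sums_eq := leq_sum_eq (fun x' _ => leq_sum _ (le_nonarc x')) sum_outdeg_nonarcs.
by move=> nxz; apply/esym/(leq_sum_eq (le_nonarc x) (sums_eq x isT)).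
Qed.

End FriendshipDigraph.

Theorem proposition2p7 (T : finType) (arc : rel T) (u v : T) :
  friendship_digraph arc -> u != v ->
  (~~ arc u v \/ ~~ arc v u) ->
  outdeg arc u = outdeg arc v.
Proof.
move=> friendship _ [nuv | nvu]; first exact: outdeg_eq_nonarc nuv.
exact/esym/(outdeg_eq_nonarc friendship nvu).
Qed.
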